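(* Let $n=5$, let $x_1<x_2<\cdots<x_5$ be fixed real numbers and $Y_i=\beta_0+\beta_1x_i+\varepsilon_i$ ($i=1,\dots,5$) with unknown $\beta_0,\beta_1\in\mathbb{R}$ and $\varepsilon_1,\dots,\varepsilon_5$ i.i.d. with a continuous distribution. Let $s_1<s_2<\cdots<s_{10}$ be the ten slopes $S_{ij}=(Y_i-Y_j)/(x_i-x_j)$, $i<j$, sorted increasingly, and let $w_1<w_2<\cdots<w_{55}$ be the $55$ Walsh averages $(s_i+s_j)/2$, $1\le i\le j\le 10$, sorted increasingly. Define $p_1=P(\beta_1\in(s_2,s_9)\wedge 2s_2\le s_1+s_9\wedge s_2+s_{10}\le 2s_9)$, $p_2=P(\beta_1\in(s_2,s_{10})\wedge 2s_2\le s_1+s_9\wedge 2s_9<s_2+s_{10})$, $p_3=P(\beta_1\in(s_1,s_9)\wedge s_1+s_9<2s_2\wedge s_2+s_{10}\le 2s_9)$, $p_4=P(\beta_1\in(s_1,s_{10})\wedge s_1+s_9<2s_2\wedge 2s_9<s_2+s_{10})$. Then $P(\beta_1\in(w_9,w_{47}))\le p_1+p_2+p_3+p_4$.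
   Context: Ties among the slopes and among the Walsh averages occur with probability zero and are ignored. *)

From HB Require Import structures.
From mathcomp Require Import all_boot all_order all_algebra.
From mathcomp Require Import all_classical all_reals all_analysis.
Set Implicit Arguments. Unset Strict Implicit. Unset Printing Implicit Defensive.
Import Order.TTheory GRing.Theory Num.Theory.
Local Open Scope classical_set_scope.
Local Open Scope ring_scope.

Section Defs.
Context {R : realType}.

Definition pairs_lt (n : nat) : seq ('I_n * 'I_n) :=
  [seq ij <- [seq (i, j) | i : 'I_n <- enum 'I_n, j : 'I_n <- enum 'I_n] | (nat_of_ord ij.1 < nat_of_ord ij.2)%N].

Definition slopes (n : nat) (x Y : 'I_n -> R) : seq R :=
  [seq (Y ij.1 - Y ij.2) / (x ij.1 - x ij.2) | ij <- pairs_lt n].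

Definition walsh (s : seq R) : seq R :=
  [seq (s`_i + s`_j) / 2 | i <- iota 0 (size s), j <- iota i (size s - i)].

Definition sortR (s : seq R) : seq R := sort <=%R s.

(* 1-based access: nth1 s k = s_k *)
Definition nth1 (s : seq R) (k : nat) : R := nth 0 s k.-1.

End Defs.

Definition mutually_independent (d : measure_display) (T : measurableType d)
  (R : realType) (P : probability T R) (n : nat) (X : 'I_n -> T -> R) : Prop :=
  forall B : 'I_n -> set R, (forall i, measurable (B i)) ->
    P (\bigcap_(i in [set: 'I_n]) (X i @^-1` B i)) =
    (\prod_(i < n) P (X i @^-1` B i))%E.

(* The inequality holds outcome by outcome: with the sorted slopes
   s_1 <= ... <= s_10, the event {w_9 < beta1 < w_47} is contained in the union
   of the four events.
   No Walsh average lies below s_1 or above s_10, hence s_1 <= w_9 and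
   w_47 <= s_10.  If 2 s_2 <= s_1 + s_9, the only averages below s_2 are
   (s_1 + s_j)/2 with j <= 8, at most eight of them, so s_2 <= w_9; symmetrically,
   if s_2 + s_10 <= 2 s_9, only the eight averages (s_j + s_10)/2 with j >= 3 can
   exceed s_9, so w_47 <= s_9.  The four sign patterns give the four events.
   The events are measurable because c < (k-th order statistic) is a condition
   on how many of the values exceed c. *)

From HB Require Import structures.
From mathcomp Require Import all_boot all_order all_algebra.
From mathcomp Require Import all_classical all_reals all_analysis.
From mathcomp Require Import lra measurable_realfun.
Import Order.TTheory GRing.Theory Num.Theory.
Local Open Scope classical_set_scope.
Local Open Scope ring_scope.

Lemma count_eq0_all (T : Type) (p : pred T) (u : seq T) :
  all (predC p) u -> count p u = 0%N.
Proof. by rewrite all_predC has_count -leqNgt leqn0 => /eqP. Qed.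

Lemma count_le_take (T : Type) (p : pred T) (u : seq T) k :
  all (predC p) (drop k u) -> (count p u <= k)%N.
Proof.
move=> /count_eq0_all count_drop.
rewrite -(cat_take_drop k u) count_cat count_drop addn0.
by apply: leq_trans (count_size _ _) _; rewrite size_take_min geq_minl.
Qed.

Lemma count_le_drop (T : Type) (p : pred T) (u : seq T) k :
  all (predC p) (take k u) -> (count p u <= size u - k)%N.
Proof.
move=> /count_eq0_all count_take.
rewrite -[in count _ u](cat_take_drop k u) count_cat count_take add0n.
by rewrite -size_drop count_size.
Qed.

Section OrderStatistics.
Context {R : realType}.
Implicit Types (s : seq R) (c : R).

Lemma sortR_sorted s : sorted <=%R (sortR s).
Proof. exact/sort_sorted/le_total. Qed.

Lemma size_sortR s : size (sortR s) = size s.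
Proof. exact: size_sort. Qed.

Lemma count_sortR (p : pred R) s : count p (sortR s) = count p s.
Proof. by apply/permP; rewrite perm_sort. Qed.

Section Sorted.
Context {s : seq R} (s_sorted : sorted <=%R s).

Lemma le_nth_sorted i j : (i <= j)%N -> (j < size s)%N -> s`_i <= s`_j.
Proof.
by move=> ij js; apply: (sorted_leq_nth le_trans lexx) => //; rewrite inE (leq_ltn_trans ij).
Qed.

Lemma all_take_le_nth k : (k < size s)%N -> all (<= s`_k) (take k.+1 s).
Proof.
move=> ks; apply/(all_nthP 0) => i; rewrite size_takel // => ik.
by rewrite nth_take //; apply: le_nth_sorted.
Qed.

Lemma all_drop_ge_nth k : all (>= s`_k) (drop k s).
Proof.
apply/(all_nthP 0) => i; rewrite size_drop => iks; rewrite nth_drop.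
by apply: le_nth_sorted (leq_addr _ _) _; rewrite -ltn_subRL.
Qed.

Lemma gt_nth_sorted c k : (k < size s)%N ->
  (c < s`_k) = (size s - k <= count (> c) s)%N.
Proof.
move=> ks; apply/idP/idP => [cs|].
  have : all (> c) (drop k s).
    by apply/allP => v /(allP (all_drop_ge_nth k)) /= vs; apply: lt_le_trans vs.
  rewrite all_count size_drop => /eqP count_drop.
  by rewrite -count_drop -[in count _ s](cat_take_drop k s) count_cat leq_addl.
apply: contraLR; rewrite -leNgt -ltnNge => sc.
have count_take : count (> c) (take k.+1 s) = 0%N.
  apply/count_eq0_all/allP => v /(allP (all_take_le_nth k ks)) /= vs.
  by rewrite -leNgt (le_trans vs).
rewrite -[in count _ s](cat_take_drop k.+1 s) count_cat count_take add0n.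
by apply: leq_ltn_trans (count_size _ _) _; rewrite size_drop subnSK.
Qed.

Lemma lt_nth_sorted c k : (k < size s)%N -> s`_k < c -> (k < count (< c) s)%N.
Proof.
move=> ks sc; have : all (< c) (take k.+1 s).
  by apply/allP => v /(allP (all_take_le_nth k ks)) /= vs; apply: le_lt_trans sc.
rewrite all_count size_takel // => /eqP count_take.
by rewrite -(cat_take_drop k.+1 s) count_cat count_take leq_addr.
Qed.

End Sorted.

Lemma ge_nth_sortR s c k : (k < size s)%N -> (count (< c) s <= k)%N ->
  c <= (sortR s)`_k.
Proof.
move=> ks; rewrite -count_sortR; apply: contraTT; rewrite -ltNge -ltnNge.
by apply: lt_nth_sorted; rewrite ?sortR_sorted ?size_sortR.
Qed.

Lemma le_nth_sortR s c k : (k < size s)%N -> (count (> c) s < size s - k)%N ->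
  (sortR s)`_k <= c.
Proof.
move=> ks; rewrite -count_sortR; apply: contraTT; rewrite -ltNge -leqNgt.
by rewrite -[in (_ - k)%N](size_sortR s) -gt_nth_sorted ?sortR_sorted ?size_sortR.
Qed.

End OrderStatistics.

Section Walsh.
Context {R : realType}.
Implicit Types (s : seq R) (x y c : R).

Lemma walsh_cons x s : walsh (x :: s) = [seq (x + y) / 2 | y <- x :: s] ++ walsh s.
Proof.
rewrite /walsh /= (iotaDl 1 0); congr (_ :: _ ++ _).
  by rewrite -map_comp -[in RHS](mkseq_nth 0 s) /mkseq -map_comp.
rewrite allpairs_mapl; congr flatten; apply: eq_map => i.
by rewrite add1n subSS (iotaDl 1 i) -map_comp.
Qed.

Lemma size_walsh s : size (walsh s) = 'C((size s).+1, 2).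
Proof.
by elim: s => // x s IHs; rewrite walsh_cons size_cat size_map IHs [in RHS]binS bin1 addnC.
Qed.

Lemma all_walsh (P : pred R) s :
  (forall u v, P u -> P v -> P ((u + v) / 2)) -> all P s -> all P (walsh s).
Proof.
move=> P_mid; elim: s => // x s IHs /andP[Px Ps].
rewrite walsh_cons all_cat (IHs Ps) andbT all_map.
by apply/allP => y /= /predU1P[-> | /(allP Ps)]; apply: P_mid.
Qed.

Lemma count_walsh_cons_lt c x s : all (>= c) s ->
  count (< c) (walsh (x :: s)) = count (fun y => (x + y) / 2 < c) (x :: s).
Proof.
move=> s_ge_c; rewrite walsh_cons count_cat count_map [count _ (walsh s)]count_eq0_all ?addn0 //.
have walsh_ge : all (>= c) (walsh s) by apply: (all_walsh _ _ _ s_ge_c) => u v /=; lra.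
by apply: sub_all walsh_ge => v /=; rewrite -leNgt.
Qed.

Lemma count_walsh_rcons_gt c s y : all (<= c) s ->
  count (> c) (walsh (rcons s y)) = count (fun x => c < (x + y) / 2) (rcons s y).
Proof.
elim: s => [|x s IHs /andP[xc s_le_c]]; first by [].
rewrite rcons_cons walsh_cons count_cat count_map (IHs s_le_c); congr (_ + _)%N.
rewrite -cats1 -cat_cons count_cat [count _ (x :: s)]count_eq0_all /= ?addn0 //.
have {}xc : x <= c := xc.
rewrite -leNgt; apply/andP; split; first lra.
by apply/allP => z /(allP s_le_c) /= zc; rewrite -leNgt; lra.
Qed.

Lemma count_walsh_cons_lt_le c x s k : sorted <=%R s -> all (>= c) s ->
  2 * c <= x + s`_k -> (count (< c) (walsh (x :: s)) <= k.+1)%N.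
Proof.
move=> s_sorted s_ge_c c_mid; rewrite count_walsh_cons_lt //.
apply: count_le_take; apply/allP => z /(allP (all_drop_ge_nth s_sorted k)) /= kz.
by rewrite -leNgt; lra.
Qed.

Lemma count_walsh_rcons_gt_le c s y k : sorted <=%R s -> all (<= c) s ->
  (k < size s)%N -> s`_k + y <= 2 * c ->
  (count (> c) (walsh (rcons s y)) <= size s - k)%N.
Proof.
move=> s_sorted s_le_c ks c_mid; rewrite count_walsh_rcons_gt //.
rewrite -subSS -(size_rcons s y); apply: count_le_drop.
rewrite -cats1 takel_cat //.
apply/allP => z /(allP (all_take_le_nth s_sorted k ks)) /= zk.
by rewrite -leNgt; lra.
Qed.

Lemma walsh10_interval_bounds (a0 a1 a2 a3 a4 a5 a6 a7 a8 a9 b : R) :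
  sorted <=%R [:: a0; a1; a2; a3; a4; a5; a6; a7; a8; a9] ->
  (sortR (walsh [:: a0; a1; a2; a3; a4; a5; a6; a7; a8; a9]))`_8 < b <
    (sortR (walsh [:: a0; a1; a2; a3; a4; a5; a6; a7; a8; a9]))`_46 ->
  [/\ a0 < b, b < a9, 2 * a1 <= a0 + a8 -> a1 < b & a1 + a9 <= 2 * a8 -> b < a8].
Proof.
set a := [:: a0; a1; a2; a3; a4; a5; a6; a7; a8; a9]; move=> a_sorted /andP[w9_b b_w47].
have lo c : (count (< c) (walsh a) <= 8)%N -> c < b.
  by move=> ?; apply: le_lt_trans w9_b; apply: ge_nth_sortR; rewrite ?size_walsh.
have hi c : (count (> c) (walsh a) <= 8)%N -> b < c.
  by move=> ?; apply: lt_le_trans b_w47 _; apply: le_nth_sortR; rewrite size_walsh.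
have tail_sorted : sorted <=%R (drop 1 a) := drop_sorted 1 a_sorted.
have init_sorted : sorted <=%R (take 9 a) := take_sorted 9 a_sorted.
have a0_le_a8 : a0 <= a8 := le_nth_sorted a_sorted 0 8 isT isT.
have a1_le_a9 : a1 <= a9 := le_nth_sorted a_sorted 1 9 isT isT.
have /andP[_ a0_min] : all (>= a0) a := all_drop_ge_nth a_sorted 0.
have a9_max : all (<= a9) (take 9 a).
  by have : all (<= a9) (rcons (take 9 a) a9) := all_take_le_nth a_sorted 9 isT;
    rewrite all_rcons => /andP[].
split => [||a1_mid|a8_mid].
- by apply/lo/(count_walsh_cons_lt_le _ _ _ 7 tail_sorted a0_min) => //=; lra.
- by apply/hi/(count_walsh_rcons_gt_le _ _ _ 1 init_sorted a9_max) => //=; lra.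
- by apply/lo/(count_walsh_cons_lt_le _ _ _ 7 tail_sorted (all_drop_ge_nth a_sorted 1)).
- by apply/hi/(count_walsh_rcons_gt_le _ _ _ 1 init_sorted (all_take_le_nth a_sorted 8 isT)).
Qed.

Lemma walsh_interval_cover (L : seq R) b : size L = 10%N -> sorted <=%R L ->
  nth1 (sortR (walsh L)) 9 < b < nth1 (sortR (walsh L)) 47 ->
  (((nth1 L 2 < b < nth1 L 9 /\ 2 * nth1 L 2 <= nth1 L 1 + nth1 L 9
      /\ nth1 L 2 + nth1 L 10 <= 2 * nth1 L 9) \/
    (nth1 L 2 < b < nth1 L 10 /\ 2 * nth1 L 2 <= nth1 L 1 + nth1 L 9
      /\ 2 * nth1 L 9 < nth1 L 2 + nth1 L 10)) \/
    (nth1 L 1 < b < nth1 L 9 /\ nth1 L 1 + nth1 L 9 < 2 * nth1 L 2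
      /\ nth1 L 2 + nth1 L 10 <= 2 * nth1 L 9)) \/
    (nth1 L 1 < b < nth1 L 10 /\ nth1 L 1 + nth1 L 9 < 2 * nth1 L 2
      /\ 2 * nth1 L 9 < nth1 L 2 + nth1 L 10).
Proof.
case: L => [|a0 [|a1 [|a2 [|a3 [|a4 [|a5 [|a6 [|a7 [|a8 [|a9 [|? ?]]]]]]]]]]] // _.
move=> /walsh10_interval_bounds/[apply] -[lo0 hi9 lo1 hi8]; rewrite /nth1 /=.
case: (lerP (2 * a1) (a0 + a8)) => a1_mid; case: (lerP (a1 + a9) (2 * a8)) => a8_mid.
- by left; left; left; rewrite lo1 ?hi8.
- by left; left; right; rewrite lo1 ?hi9.
- by left; right; rewrite lo0 ?hi8.
- by right; rewrite lo0 ?hi9.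
Qed.

End Walsh.

Section MeasurableOrderStatistics.
Context d (T : measurableType d) (R : realType).

Lemma measurable_count_gt (I : Type) (idx : seq I) (F : I -> T -> R) c j :
  (forall i, measurable_fun setT (F i)) ->
  measurable_fun setT (fun t => (j <= count (> c) [seq F i t | i <- idx])%N).
Proof.
move=> mF; elim: idx j => [|i idx IH] j /=; first exact: measurable_cst.
rewrite (_ : (fun t => _) = fun t => if c < F i t
    then (j.-1 <= count (> c) [seq F i t | i <- idx])%N
    else (j <= count (> c) [seq F i t | i <- idx])%N); last first.
  by apply/funext => t; case: (c < F i t); rewrite ?add1n ?add0n //; case: j.
apply: measurable_fun_if => //; last 2 first.
- exact: measurable_funS (IH _).
- exact: measurable_funS (IH _).
by apply: measurable_fun_ltr => //; exact: measurable_cst.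
Qed.

Lemma measurable_nth_sortR (I : Type) (idx : seq I) (F : I -> T -> R) k :
  (forall i, measurable_fun setT (F i)) ->
  measurable_fun setT (fun t => (sortR [seq F i t | i <- idx])`_k).
Proof.
move=> mF; have [kidx | idxk] := ltnP k (size idx); last first.
  rewrite (_ : (fun t => _) = cst 0); first exact: measurable_cst.
  by apply/funext => t; rewrite nth_default // size_sortR size_map.
apply: (measurability _ (RGenOInfty.measurableE R)) => //.
move=> _ [_ [c ->] <-]; rewrite setTI.
rewrite (_ : _ @^-1` _ =
  (fun t => size idx - k <= count (> c) [seq F i t | i <- idx])%N @^-1` [set true]).
  by rewrite -[X in measurable X]setTI; exact: measurable_count_gt.
apply/seteqP; split => t /=; rewrite in_itv /= andbT gt_nth_sorted ?sortR_sorted;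
  by rewrite ?size_sortR ?size_map ?count_sortR.
Qed.

Lemma measurable_nth_sortR_walsh (L : T -> seq R) n k :
  (forall t, size (L t) = n) -> (forall i, measurable_fun setT (fun t => (L t)`_i)) ->
  measurable_fun setT (fun t => (sortR (walsh (L t)))`_k).
Proof.
move=> size_L mL.
pose idx := [seq (i, j) | i <- iota 0 n, j <- iota i (n - i)].
rewrite (_ : (fun t => _) =
  fun t => (sortR [seq ((L t)`_ij.1 + (L t)`_ij.2) / 2 | ij <- idx])`_k).
  apply: measurable_nth_sortR => ij; apply: measurable_funM; last exact: measurable_cst.
  exact: measurable_funD.
by apply/funext => t; rewrite /walsh size_L map_allpairs.
Qed.

Lemma measurable_bool_set (b : T -> bool) : measurable_fun setT b -> measurable [set t | b t].
Proof. by move=> mb; rewrite -[X in measurable X]setTI; exact: mb. Qed.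

Lemma measure_le_sum4 (mu : {measure set T -> \bar R}) (A B1 B2 B3 B4 : set T) :
  measurable A -> measurable B1 -> measurable B2 -> measurable B3 -> measurable B4 ->
  A `<=` B1 `|` B2 `|` B3 `|` B4 -> (mu A <= mu B1 + mu B2 + mu B3 + mu B4)%E.
Proof.
move=> mA mB1 mB2 mB3 mB4 AB.
have mB12 := measurableU _ _ mB1 mB2; have mB123 := measurableU _ _ mB12 mB3.
apply: le_trans (le_measure _ (mem_set mA) (mem_set (measurableU _ _ mB123 mB4)) AB) _.
apply: le_trans (measureU2 _ mB123 mB4) _; rewrite leeD2r //.
apply: le_trans (measureU2 _ mB12 mB3) _; rewrite leeD2r //.
exact: measureU2.
Qed.

End MeasurableOrderStatistics.

Lemma size_pairs_lt5 : size (pairs_lt 5) = 10%N.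
Proof.
have enum5 : enum 'I_5 = [:: @Ordinal 5 0 isT; @Ordinal 5 1 isT; @Ordinal 5 2 isT;
                             @Ordinal 5 3 isT; @Ordinal 5 4 isT].
  by apply: (inj_map val_inj); rewrite val_enum_ord.
by rewrite /pairs_lt enum5.
Qed.

Ltac measurable_event :=
  repeat first [ match goal with H : _ |- _ => exact: H end
               | exact: measurable_cst
               | apply: measurableI | apply: measurable_bool_set | apply: measurable_and
               | apply: measurable_fun_ltr | apply: measurable_fun_ler
               | apply: measurable_funD | apply: measurable_funM ].

Theorem theorem4 (d : measure_display) (T : measurableType d) (R : realType)
  (P : probability T R) (x : 'I_5 -> R) (beta0 beta1 : R)
  (eps : 'I_5 -> T -> R) :
  (forall i j : 'I_5, (i < j)%N -> x i < x j) ->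
  (forall i, measurable_fun [set: T] (eps i)) ->
  mutually_independent P eps ->
  (forall i (B : set R), measurable B ->
     P (eps i @^-1` B) = P (eps ord0 @^-1` B)) ->
  (forall a : R, P (eps ord0 @^-1` [set a]) = 0%E) ->
  let s (t : T) (k : nat) : R :=
    nth1 (sortR (slopes x (fun i => beta0 + beta1 * x i + eps i t))) k in
  let w (t : T) (k : nat) : R :=
    nth1 (sortR (walsh (sortR (slopes x (fun i => beta0 + beta1 * x i + eps i t))))) k in
  let p1 := P [set t | s t 2%N < beta1 < s t 9%N /\ 2 * s t 2%N <= s t 1%N + s t 9%N
                       /\ s t 2%N + s t 10%N <= 2 * s t 9%N] in
  let p2 := P [set t | s t 2%N < beta1 < s t 10%N /\ 2 * s t 2%N <= s t 1%N + s t 9%N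
                       /\ 2 * s t 9%N < s t 2%N + s t 10%N] in
  let p3 := P [set t | s t 1%N < beta1 < s t 9%N /\ s t 1%N + s t 9%N < 2 * s t 2%N
                       /\ s t 2%N + s t 10%N <= 2 * s t 9%N] in
  let p4 := P [set t | s t 1%N < beta1 < s t 10%N /\ s t 1%N + s t 9%N < 2 * s t 2%N
                       /\ 2 * s t 9%N < s t 2%N + s t 10%N] in
  let p0 := P [set t | w t 9%N < beta1 < w t 47%N] in
  (p0 <= p1 + p2 + p3 + p4)%E.
Proof.
(* The [let]s sit under the [is_true] coercion, so they are unfolded rather than introduced. *)
move=> _ meps _ _ _; cbv zeta.
pose Y t i := beta0 + beta1 * x i + eps i t.
pose slope (ij : 'I_5 * 'I_5) t := (Y t ij.1 - Y t ij.2) / (x ij.1 - x ij.2).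
have mslope ij : measurable_fun setT (slope ij).
  apply: measurable_funM; last exact: measurable_cst.
  by apply: measurable_funB; apply: measurable_funD => //; exact: measurable_cst.
have ms k : measurable_fun setT (fun t => nth1 (sortR (slopes x (Y t))) k).
  exact: measurable_nth_sortR _ k.-1 mslope.
have size_slopes t : size (sortR (slopes x (Y t))) = 10%N.
  by rewrite size_sortR size_map size_pairs_lt5.
have mw k : measurable_fun setT (fun t => nth1 (sortR (walsh (sortR (slopes x (Y t))))) k).
  by apply: measurable_nth_sortR_walsh size_slopes _ => i; exact: ms i.+1.
apply: measure_le_sum4; try by measurable_event.
by move=> t /= ?; apply: walsh_interval_cover; rewrite ?size_slopes ?sortR_sorted.
Qed.
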